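(* Assume $X$ is a semimartingale. Define the predictable set $$\Gamma_0:=\{(\omega,t,x): X_{t-}(\omega)<b(t),\ x=b(t)-X_{t-}(\omega)\}.$$ If $\mathbf 1_{\Gamma_0}*\nu^X\equiv 0$, then $\mathbb P(J_0)=0$. In particular this holds whenever $\nu^X$ admits a predictable disintegration $\nu^X(\omega,dt,dx)=K(\omega,t,dx)\,dA_t(\omega)$, with $A$ a predictable increasing process and $K(\omega,t,\cdot)$ a diffuse (atomless) measure for $\mathbb P\otimes dA$-almost every $(\omega,t)$.
   Context: Let $(\Omega,\mathcal F,\mathbb F=(\mathcal F_t)_{t\ge0},\mathbb P)$ be a filtered probability space satisfying the usual conditions. Let $X$ be a real-valued $\mathbb F$-semimartingale (càdlàg) and $b:[0,\infty)\to\mathbb R$ a continuous deterministic function, with $X_0<b(0)$ identically. $X_{t-}$ denotes the left limit. Let $\mu^X(dt,dx):=\sum_{s>0:\Delta X_s\ne0}\delta_{(s,\Delta X_s)}(dt,dx)$ be the jump measure of $X$ and $\nu^X$ its predictable compensator. For a function $W\ge0$ on $\Omega\times[0,\infty)\times\mathbb R$, $(W*\mu)_t:=\int_0^t\int_{\mathbb R}W(s,x)\,\mu(ds,dx)$; ''$\equiv0$'' means identically zero up to evanescence. Set $Y_t:=X_t-b(t)$, $\tau:=\inf\{t\ge0:Y_t\ge0\}$ ($\inf\emptyset=\infty$), and $J_0:=\{\tau<\infty,\,Y_{\tau-}<0,\,Y_\tau=0\}$. *)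

From HB Require Import structures.
From mathcomp Require Import all_boot all_order all_algebra.
From mathcomp Require Import all_classical all_reals all_analysis.
From mathcomp Require Import measurable_realfun.
Set Implicit Arguments. Unset Strict Implicit. Unset Printing Implicit Defensive.
Import Order.TTheory GRing.Theory Num.Theory.
Import numFieldNormedType.Exports.
Local Open Scope classical_set_scope.
Local Open Scope ring_scope.

(* Time is indexed by R, only t >= 0 matters.  Processes are X : R -> T -> R
   (X t w = X_t(w)).  Sigma-algebras of the filtration are F t : set (set T). *)
Section Stoch.
Context {R : realType} {d : measure_display} {T : measurableType d}.

Definition filtration (F : R -> set (set T)) :=
  (forall t, 0 <= t -> sigma_algebra setT (F t) /\ F t `<=` measurable) /\
  (forall s t, 0 <= s -> s <= t -> F s `<=` F t).

Definition usual_conditions (P : probability T R) (F : R -> set (set T)) :=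
  filtration F /\
  (forall t, 0 <= t -> F t = \bigcap_(u in [set u | t < u]) F u) /\
  (forall N, P.-negligible N -> F 0 N).

Definition cadlag (X : R -> T -> R) := forall w (t : R), 0 <= t ->
  ((fun s => X s w) @ t^'+ --> X t w) /\
  (0 < t -> exists l : R, (fun s => X s w) @ t^'- --> l).

Definition leftlim (X : R -> T -> R) (t : R) (w : T) : R :=
  lim ((fun s => X s w) @ t^'-).
Definition jump (X : R -> T -> R) (t : R) (w : T) : R := X t w - leftlim X t w.

Definition adapted (F : R -> set (set T)) (X : R -> T -> R) :=
  forall t, 0 <= t -> forall B : set R, measurable B -> F t (X t @^-1` B).

Definition stopping_time (F : R -> set (set T)) (tau : T -> \bar R) :=
  (forall w, (0 <= tau w)%E) /\
  (forall t, 0 <= t -> F t [set w | (tau w <= t%:E)%E]).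

Definition stopped (X : R -> T -> R) (tau : T -> \bar R) (t : R) (w : T) : R :=
  if (tau w < t%:E)%E then X (fine (tau w)) w else X t w.

Definition martingale (P : probability T R) (F : R -> set (set T))
    (M : R -> T -> R) :=
  cadlag M /\ adapted F M /\
  (forall t, 0 <= t -> P.-integrable setT (EFin \o M t)) /\
  (forall s t, 0 <= s -> s <= t -> forall A, F s A ->
     (\int[P]_(w in A) (M t w)%:E = \int[P]_(w in A) (M s w)%:E)%E).

Definition local_martingale (P : probability T R) (F : R -> set (set T))
    (M : R -> T -> R) :=
  cadlag M /\ adapted F M /\
  exists tau : nat -> T -> \bar R,
    (forall n, stopping_time F (tau n)) /\
    (forall n w, (tau n w <= tau n.+1 w)%E) /\
    {ae P, forall w, (fun n => tau n w) @ \oo --> +oo%E} /\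
    (forall n, martingale P F (stopped M (tau n))).

Definition finite_variation (F : R -> set (set T)) (A : R -> T -> R) :=
  cadlag A /\ adapted F A /\ (forall w, A 0 w = 0) /\
  (forall w t, 0 <= t -> bounded_variation 0 t (fun s => A s w)).

Definition semimartingale (P : probability T R) (F : R -> set (set T))
    (X : R -> T -> R) :=
  cadlag X /\ adapted F X /\
  exists M A, local_martingale P F M /\ (forall w, M 0 w = 0) /\
    finite_variation F A /\
    (forall t w, 0 <= t -> X t w = X 0 w + M t w + A t w).

Definition pred_rects (F : R -> set (set T)) : set (set (T * R)) :=
  [set C | (exists A, F 0 A /\ C = A `*` [set 0]) \/
           (exists s t A, [/\ 0 <= s, s < t, F s A &
                              C = A `*` [set u | s < u <= t]])].

Definition predictable_set (F : R -> set (set T)) := <<s pred_rects F >>.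

Definition predictable_fun (F : R -> set (set T)) (H : T -> R -> \bar R) :=
  forall B : set (\bar R), measurable B ->
    predictable_set F [set p | B (H p.1 p.2)].

Definition ptilde_rects (F : R -> set (set T)) : set (set (T * (R * R))) :=
  [set C | exists A B, [/\ predictable_set F A, measurable B &
             C = [set p | A (p.1, p.2.1) /\ B p.2.2]]].

Definition ptilde_fun (F : R -> set (set T)) (W : T -> R * R -> \bar R) :=
  forall B : set (\bar R), measurable B ->
    <<s ptilde_rects F >> [set p | B (W p.1 p.2)].

(** (W * mu^X)_oo (w) = sum over jump times s > 0 of W(w, s, Delta X_s). *)
Definition mu_int_oo (X : R -> T -> R) (W : T -> R * R -> \bar R) (w : T) :=
  \esum_(s in [set s : R | 0 < s /\ jump X s w != 0]) W w (s, jump X s w).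

Definition nu_int (nu : T -> {measure set (R * R) -> \bar R})
    (W : T -> R * R -> \bar R) (w : T) (t : R) :=
  (\int[nu w]_(z in [set z : R * R | (0 < z.1 <= t)%R]) W w z)%E.
Definition nu_int_oo (nu : T -> {measure set (R * R) -> \bar R})
    (W : T -> R * R -> \bar R) (w : T) :=
  (\int[nu w]_(z in [set z : R * R | (0 < z.1)%R]) W w z)%E.

Definition jump_compensator (P : probability T R) (F : R -> set (set T))
    (X : R -> T -> R) (nu : T -> {measure set (R * R) -> \bar R}) :=
  forall W : T -> R * R -> \bar R, ptilde_fun F W ->
    (forall w z, (0 <= W w z)%E) ->
    predictable_fun F (nu_int nu W) /\
    (\int[P]_w mu_int_oo X W w = \int[P]_w nu_int_oo nu W w)%E.

Definition Yproc (X : R -> T -> R) (b : R -> R) : R -> T -> R :=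
  fun t w => X t w - b t.

Definition hit_time (X : R -> T -> R) (b : R -> R) (w : T) : \bar R :=
  ereal_inf [set t%:E | t in [set t | 0 <= t /\ 0 <= Yproc X b t w]].

Definition J0 (X : R -> T -> R) (b : R -> R) : set T :=
  [set w | exists r : R, [/\ hit_time X b w = r%:E,
                             leftlim (Yproc X b) r w < 0 &
                             Yproc X b r w = 0]].

Definition Gamma0 (X : R -> T -> R) (b : R -> R) (w : T) : set (R * R) :=
  [set z | leftlim X z.1 w < b z.1 /\ z.2 = b z.1 - leftlim X z.1 w].

End Stoch.

From HB Require Import structures.
From mathcomp Require Import all_boot all_order all_algebra.
From mathcomp Require Import all_classical all_reals all_analysis.
From mathcomp Require Import measurable_realfun.
From mathcomp Require Import lra ring.
Import Order.TTheory GRing.Theory Num.Theory.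
Import numFieldNormedType.Exports.
Local Open Scope classical_set_scope.
Local Open Scope ring_scope.
Set Implicit Arguments. Unset Strict Implicit. Unset Printing Implicit Defensive.

(* Let W be the indicator of the predictable set Gamma0_pos of marks
   x = -Y_{t-} > 0 at times t > 0; it is dominated by the indicator of Gamma0.
   On J0 the jump of X at the hitting time is exactly -Y_{tau-}, so W * mu^X >= 1
   there, whereas the compensator identity gives E[W * mu^X] = E[W * nu^X] = 0.
   Measurability is obtained by describing "Y jumps from below onto 0" and the
   left limits of Y through rational times only.
   For a disintegration nu = K(dx) dA, the x-section of Gamma0 at (w, t) is a
   single point, which K(w, t, .) does not charge outside the P (x) dA-null set N. *)

Section ge0_integral_minorants.
Import HBNNSimple.
Local Open Scope ereal_scope.
Context d (T : measurableType d) (R : realType) (mu : {measure set T -> \bar R}).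
Implicit Types (D S : set T) (f g : T -> \bar R).

Lemma measure_le_ge0_integral D S f : measurable S -> S `<=` D ->
  (forall x, D x -> 0 <= f x) -> (forall x, S x -> 1 <= f x) ->
  mu S <= \int[mu]_(x in D) f x.
Proof.
move=> mS SD f0 f1; rewrite ge0_integralE//.
apply: ereal_sup_ubound => /=; exists (indic_nnsfun R mS); last first.
  by rewrite sintegral_indic.
move=> x /=; rewrite /patch mindicE; case: ifPn => [/[!inE] Dx|].
  by have [Sx|nSx] := pselect (S x); [rewrite mem_set// f1|rewrite memNset// f0].
by rewrite notin_setE => nDx; rewrite memNset//; apply: contra_not nDx; exact: SD.
Qed.

Lemma ge0_integral_eq0 D f : (forall x, D x -> 0 <= f x) ->
  (forall S, measurable S -> S `<=` D `&` [set x | 0 < f x] -> mu S = 0) ->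
  \int[mu]_(x in D) f x = 0.
Proof.
move=> f0 null_pos; apply/eqP; rewrite eq_le integral_ge0// andbT ge0_integralE//.
apply: ge_ereal_sup => _ /= [h hf <-].
pose S := h @^-1` `]0%R, +oo[%classic.
have mS : measurable S by rewrite -[S]setTI; exact: (measurable_funP h).
have muS : mu S = 0.
  apply: null_pos => // x; rewrite /S /= in_itv/= andbT => hx; have := hf x.
  rewrite /patch; case: ifPn => [/[!inE] Dx|]; last by rewrite lee_fin leNgt hx.
  by move=> le; split => //; rewrite (lt_le_trans _ le)// lte_fin.
have -> : sintegral mu h = sintegral mu (h \_ setT) by rewrite patch_setT.
rewrite -integral_nnsfun// (ge0_negligible_integral _ _ _ _ muS)//; last 2 first.
- by apply/measurable_EFinP; exact: measurable_funP.
- by move=> x _; rewrite lee_fin.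
rewrite integral0_eq// => x [_ nSx]; apply/eqP; rewrite eqe eq_le fun_ge0 andbT.
by rewrite leNgt; apply/negP => hx; apply: nSx; rewrite /S /= in_itv/= andbT.
Qed.

Lemma ge0_le_integral_minorants D f g : (forall x, D x -> 0 <= f x) ->
  (forall x, D x -> f x <= g x) ->
  \int[mu]_(x in D) f x <= \int[mu]_(x in D) g x.
Proof.
move=> f0 fg; have g0 x : D x -> 0 <= g x by move=> Dx; exact: le_trans (f0 _ Dx) (fg _ Dx).
rewrite !ge0_integralE//; apply: ereal_sup_le => _ [h hf <-]; exists h => // x.
apply: le_trans (hf x) _; rewrite /patch; case: ifPn => // /[!inE] Dx; exact: fg.
Qed.

End ge0_integral_minorants.

Section real_facts.
Context {R : realType}.

Lemma cvg_within_dist_lt (A : set R) (t l : R) (f : R -> R) :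
  f @ within A (nbhs t) --> l -> forall e, 0 < e ->
  exists2 δ, 0 < δ & forall u, `|t - u| < δ -> A u -> `|l - f u| < e.
Proof.
move=> /cvgrPdist_lt fl e e0; have := fl e e0.
by rewrite /prop_near1 /within /= => /nbhs_ballP[δ /= δ0 Hδ]; exists δ.
Qed.

Lemma exists_rat_between (x y : R) : x < y ->
  exists q : rat, x < ratr q /\ ratr q < y.
Proof. by move=> /rat_in_itvoo[q]; rewrite in_itv /= => /andP[]; exists q. Qed.

Lemma invr_succn_gt0 (k : nat) : 0 < (k.+1%:R^-1 : R).
Proof. by rewrite invr_gt0 ltr0n. Qed.

Lemma within_ge0_continuousP (f : R -> R) :
  {within [set t | 0 <= t], continuous f} ->
  {in `]0, +oo[, continuous f} /\ f x @[x --> 0^'+] --> f 0.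
Proof. by move=> fc; apply/continuous_within_itvcyP; rewrite set_itvcy. Qed.

Lemma within_ge0_cvg_right (f : R -> R) :
  {within [set t | 0 <= t], continuous f} ->
  forall t, 0 <= t -> f x @[x --> t^'+] --> f t.
Proof.
move=> /within_ge0_continuousP[fint f0] t; rewrite le_eqVlt => /orP[/eqP<-//|t0].
by apply: cvg_at_right_filter; apply: fint; rewrite in_itv /= t0.
Qed.

Lemma within_ge0_cvg_left (f : R -> R) :
  {within [set t | 0 <= t], continuous f} ->
  forall t, 0 < t -> f x @[x --> t^'-] --> f t.
Proof.
move=> /within_ge0_continuousP[fint _] t t0.
by apply: cvg_at_left_filter; apply: fint; rewrite in_itv /= t0.
Qed.

End real_facts.

Section paths.
Context {R : realType} {d : measure_display} {T : measurableType d}.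
Variables (X : R -> T -> R) (b : R -> R).
Hypothesis HX : cadlag X.
Hypothesis Hb : {within [set t : R | 0 <= t], continuous b}.
Local Notation Y := (Yproc X b).

Lemma Yproc_right_dist_lt t w : 0 <= t -> forall e, 0 < e ->
  exists2 δ, 0 < δ & forall u, t <= u < t + δ -> `|Y t w - Y u w| < e.
Proof.
move=> t0 e e0; have e2 : 0 < e / 2 by rewrite divr_gt0.
have [δ1 δ10 HXd] := cvg_within_dist_lt (HX w t0).1 e2.
have [δ2 δ20 Hbd] := cvg_within_dist_lt (within_ge0_cvg_right Hb t0) e2.
exists (Num.min δ1 δ2); first by rewrite lt_min δ10.
move=> u /andP[tu ut]; have [->|tu'] := eqVneq t u; first by rewrite subrr normr0.
have tlu : t < u by rewrite lt_neqAle tu' tu.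
have : `|t - u| < Num.min δ1 δ2 by rewrite distrC ger0_norm ?subr_ge0 // ltrBlDl.
rewrite lt_min => /andP[d1 d2]; have hb := Hbd u d2 tlu; have hx := HXd u d1 tlu.
rewrite /Yproc (_ : _ - _ = (X t w - X u w) - (b t - b u)); last by lra.
by rewrite (le_lt_trans (ler_normB _ _))// [e]splitr ltrD.
Qed.

Lemma Yproc_cvg_left t w : 0 < t ->
  (fun s => Y s w) @ t^'- --> leftlim Y t w /\ leftlim X t w = leftlim Y t w + b t.
Proof.
move=> t0; have [_ /(_ t0) [l Xl]] := HX w (ltW t0).
have Yl : (fun s => Y s w) @ t^'- --> l - b t.
  exact: cvgB Xl (within_ge0_cvg_left Hb t0).
by rewrite /leftlim (cvg_lim _ Yl)// (cvg_lim _ Xl)// subrK.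
Qed.

Lemma Yproc_left_dist_lt t w : 0 < t -> forall e, 0 < e ->
  exists2 δ, 0 < δ & forall u, t - δ < u < t -> `|leftlim Y t w - Y u w| < e.
Proof.
move=> t0 e e0; have [δ δ0 Hδ] := cvg_within_dist_lt (Yproc_cvg_left w t0).1 e0.
exists δ => // u /andP[tu ut]; apply: Hδ => //.
by rewrite ger0_norm ?subr_ge0 ?ltW// ltrBlDr -ltrBlDl.
Qed.

End paths.

Section rational_crossings.
Context {R : realType} {d : measure_display} {T : measurableType d}.
Variables (X : R -> T -> R) (b : R -> R).
Local Notation Y := (Yproc X b).

Definition jumps_to_zero (w : T) :=
  exists s, [/\ 0 < s, Y s w = 0 & leftlim Y s w < 0].

Definition above_level (k : nat) (u : rat) (w : T) := - k.+1%:R^-1 < Y (ratr u) w.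

(* After the rational time p, Y stays at or below -1/(k+1) at rational times
   for a while, and right after the infimum of the rational times where it
   exceeds that level it is within any 1/(j+1) of 0.  Only rational times
   occur, which makes the set measurable. *)
Definition rat_crossing (p : rat) (k : nat) : set T := [set w | 0 <= (ratr p : R) /\
  (exists a : rat, (ratr p : R) < ratr a /\
     forall u : rat, (ratr p : R) < ratr u -> (ratr u : R) < ratr a -> ~ above_level k u w) /\
  forall j : nat, exists v : rat,
    (exists u : rat, (ratr p : R) < ratr u /\ (ratr u : R) < ratr v /\ above_level k u w) /\
    forall u : rat, (ratr p : R) < ratr u ->
      (exists u' : rat, (ratr p : R) < ratr u' /\ (ratr u' : R) < ratr u /\ above_level k u' w) ->
      (ratr u : R) < ratr v -> `|Y (ratr u) w| < j.+1%:R^-1].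

Hypothesis HX : cadlag X.
Hypothesis Hb : {within [set t : R | 0 <= t], continuous b}.

Section crossing_time.
Variables (p : rat) (k : nat) (w : T).
Hypothesis crossing : rat_crossing p k w.
Let eps : R := k.+1%:R^-1.

Let S := [set x : R | exists2 u : rat, (ratr p : R) < ratr u /\ above_level k u w & x = ratr u].

Let S_neq0 : S !=set0.
Proof.
have [v [[u [pu [_ Su]]] _]] := crossing.2.2 0%N.
by exists (ratr u); exists u.
Qed.

Let S_lbound : exists2 a, ratr p < a & lbound S a.
Proof.
have [a [pa Ha]] := crossing.2.1; exists (ratr a) => // x [u [pu Su] ->].
by rewrite leNgt; apply/negP => ua; exact: Ha u pu ua Su.
Qed.

Definition crossing_time := inf S.

Let crossing_time_le x : S x -> crossing_time <= x.
Proof. by move=> Sx; apply: ge_inf => //; have [a _ ?] := S_lbound; exists a. Qed.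

Lemma crossing_time_gt : ratr p < crossing_time.
Proof. by have [a pa aS] := S_lbound; exact: lt_le_trans pa (lb_le_inf S_neq0 aS). Qed.

Let crossing_time_gt0 : 0 < crossing_time.
Proof. exact: le_lt_trans crossing.1 crossing_time_gt. Qed.

Lemma Yproc_le_before_crossing u : ratr p < u -> u < crossing_time -> Y u w <= - eps.
Proof.
move=> pu us; rewrite leNgt; apply/negP => Hu.
have u0 : 0 <= u by exact: le_trans crossing.1 (ltW pu).
have e0 : 0 < Y u w + eps by rewrite -ltrBlDr sub0r.
have [δ δ0 Hδ] := Yproc_right_dist_lt HX Hb w u0 e0.
have [q [uq qm]] : exists q : rat, u < ratr q /\ ratr q < Num.min (u + δ) crossing_time.
  by apply: exists_rat_between; rewrite lt_min ltrDl δ0 us.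
move: qm; rewrite lt_min => /andP[qδ qs].
suff /crossing_time_le : S (ratr q) by rewrite leNgt qs.
exists q => //; split; first exact: lt_trans uq.
have := Hδ (ratr q); rewrite (ltW uq) qδ => /(_ isT).
by rewrite ltr_norml /above_level => /andP[_]; rewrite ltrD2l ltrNl.
Qed.

Lemma leftlim_crossing_le : leftlim Y crossing_time w <= - eps.
Proof.
apply/ler_addgt0Pr => e e0.
have [δ δ0 Hδ] := Yproc_left_dist_lt HX Hb w crossing_time_gt0 e0.
pose m := Num.max (crossing_time - δ) (ratr p); pose u := (m + crossing_time) / 2.
have ms : m < crossing_time by rewrite gt_max crossing_time_gt gtrBl δ0.
have mu : m < u by rewrite /u; lra.
have us : u < crossing_time by rewrite /u; lra.
move: mu; rewrite gt_max => /andP[su pu].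
have := Hδ u; rewrite su us => /(_ isT); rewrite ltr_norml => /andP[_ h].
have := Yproc_le_before_crossing pu us; lra.
Qed.

Lemma Yproc_crossing_eq0 : Y crossing_time w = 0.
Proof.
apply/eqP; rewrite -normr_eq0 eq_le normr_ge0 andbT; apply/ler_addgt0Pr => e e0.
have [j Hj] := ltr_add_invr (divr_gt0 e0 (ltr0n _ 2) : 0 < e / 2).
rewrite add0r in Hj.
have [v [[u1 [pu1 [u1v Su1]]] Hv]] := crossing.2.2 j.
have sv : crossing_time < ratr v.
  by apply: le_lt_trans u1v; apply: crossing_time_le; exists u1.
have [δ δ0 Hδ] :=
  Yproc_right_dist_lt HX Hb w (ltW crossing_time_gt0) (invr_succn_gt0 j).
have [q [sq qm]] :
    exists q : rat, crossing_time < ratr q /\ ratr q < Num.min (crossing_time + δ) (ratr v).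
  by apply: exists_rat_between; rewrite lt_min ltrDl δ0 sv.
move: qm; rewrite lt_min => /andP[qδ qv].
have [_ [u' [pu' Su'] ->] u'q] := inf_lt S_neq0 sq.
have Yq := Hv q (lt_trans crossing_time_gt sq) (ex_intro _ u' (conj pu' (conj u'q Su'))) qv.
have := Hδ (ratr q); rewrite (ltW sq) qδ => /(_ isT) Hd.
rewrite add0r; apply: ltW.
rewrite -(subrK (Y (ratr q) w) (Y crossing_time w)) (le_lt_trans (ler_normD _ _))//.
set ε := (j.+1%:R^-1 : R) in Hj Yq Hd *; lra.
Qed.

Lemma rat_crossing_jumps_to_zero : jumps_to_zero w.
Proof.
exists crossing_time; split => //; first exact: Yproc_crossing_eq0.
by rewrite (le_lt_trans leftlim_crossing_le)// oppr_lt0 invr_succn_gt0.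
Qed.

End crossing_time.

Lemma jumps_to_zero_rat_crossing w : jumps_to_zero w -> exists p k, rat_crossing p k w.
Proof.
move=> [r [r0 Yr Zr]].
have Z2 : 0 < - leftlim Y r w / 2 by rewrite divr_gt0// oppr_gt0.
have [k Hk] := ltr_add_invr Z2; rewrite add0r in Hk.
have [δ δ0 Hδ] := Yproc_left_dist_lt HX Hb w r0 (invr_succn_gt0 k).
have below u : r - δ < u -> u < r -> Y u w < - k.+1%:R^-1.
  move=> h1 h2; have := Hδ u; rewrite h1 h2 => /(_ isT).
  rewrite ltr_norml => /andP[g1 g2]; set ε := (k.+1%:R^-1 : R) in Hk g1 g2 *; lra.
have [p [pm pr]] : exists p : rat, Num.max (r - δ) 0 < ratr p /\ ratr p < r.
  by apply: exists_rat_between; rewrite gt_max r0 gtrBl δ0.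
move: pm; rewrite gt_max => /andP[pm1 pm2].
have [a [pa ar]] : exists a : rat, (ratr p : R) < ratr a /\ ratr a < r.
  by apply: exists_rat_between.
exists p, k; split; first exact: ltW.
split.
  exists a; split => // u pu ua Su.
  by have := below _ (lt_trans pm1 pu) (lt_trans ua ar); rewrite ltNge (ltW Su).
move=> j.
have e0 : 0 < Num.min (k.+1%:R^-1) (j.+1%:R^-1 : R) by rewrite lt_min !invr_succn_gt0.
have [δ' δ'0 Hδ'] := Yproc_right_dist_lt HX Hb w (ltW r0) e0.
have [v [rv vd]] : exists v : rat, r < ratr v /\ ratr v < r + δ'.
  by apply: exists_rat_between; rewrite ltrDl.
have near u : r < u -> u < ratr v -> `|Y u w| < Num.min (k.+1%:R^-1) (j.+1%:R^-1 : R).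
  move=> h1 h2; have := Hδ' u; rewrite (ltW h1) (lt_trans h2 vd) => /(_ isT).
  by rewrite Yr sub0r normrN.
exists v; split.
  have [u [ru uv]] : exists u : rat, r < ratr u /\ ratr u < (ratr v : R).
    by apply: exists_rat_between.
  exists u; split; first exact: lt_trans pr ru.
  by split => //; have := near _ ru uv; rewrite lt_min ltr_norml => /andP[/andP[]].
move=> u pu [u' [pu' [u'u Su']]] uv.
have ru' : r <= ratr u'.
  rewrite leNgt; apply/negP => u'r.
  by have := below _ (lt_trans pm1 pu') u'r; rewrite ltNge (ltW Su').
by have := near _ (le_lt_trans ru' u'u) uv; rewrite lt_min => /andP[].
Qed.

End rational_crossings.

Section measurable_predicates.
Context {d : measure_display} {T : measurableType d}.
Implicit Types A B : T -> Prop.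

Lemma measurable_imp A B : measurable [set w | A w] -> measurable [set w | B w] ->
  measurable [set w | A w -> B w].
Proof.
move=> mA mB; rewrite (_ : [set w | A w -> B w] = ~` [set w | A w] `|` [set w | B w]).
  exact: measurableU (measurableC mA) mB.
apply/seteqP; split => w /=; first by have [Aw /(_ Aw)|] := pselect (A w); [right|left].
by case=> [nA /nA|].
Qed.

Lemma measurable_prop_imp (P : Prop) B : (P -> measurable [set w | B w]) ->
  measurable [set w | P -> B w].
Proof.
have [p|np] := pselect P => mB.
  by rewrite (_ : [set w | P -> B w] = [set w | B w]); [exact: mB|apply/seteqP; split=> w /=; auto].
by rewrite (_ : [set w | P -> B w] = setT)//; apply/seteqP; split=> w //= _ /np.
Qed.

Lemma measurable_prop_and (P : Prop) B : (P -> measurable [set w | B w]) ->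
  measurable [set w | P /\ B w].
Proof.
have [p|np] := pselect P => mB.
  by rewrite (_ : [set w | P /\ B w] = [set w | B w]); [exact: mB|apply/seteqP; split=> w /=; [case|]].
by rewrite (_ : [set w | P /\ B w] = set0)//; apply/seteqP; split=> w //= [/np].
Qed.

Lemma measurable_exists (I : countType) (A : I -> T -> Prop) :
  (forall i, measurable [set w | A i w]) -> measurable [set w | exists i, A i w].
Proof.
move=> mA; rewrite (_ : [set w | exists i, A i w] = \bigcup_i [set w | A i w]).
  exact: countable_bigcupT_measurable (countableP _) mA.
by apply/seteqP; split=> w /= [i]; exists i.
Qed.

Lemma measurable_forall (I : countType) (A : I -> T -> Prop) :
  (forall i, measurable [set w | A i w]) -> measurable [set w | forall i, A i w].
Proof.
move=> mA; rewrite (_ : [set w | forall i, A i w] = ~` [set w | exists i, ~ A i w]).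
  by apply: measurableC; apply: measurable_exists => i; exact: measurableC (mA i).
apply/seteqP; split=> w /=; first by move=> Aw [i /(_ (Aw i))].
by move=> nAw i; apply: contra_notP nAw => nA; exists i.
Qed.

End measurable_predicates.

Section rat_crossing_measurable.
Context {R : realType} {d : measure_display} {T : measurableType d}.
Variables (X : R -> T -> R) (b : R -> R).
Hypothesis mX : forall t, 0 <= t -> forall B : set R, measurable B ->
  measurable (X t @^-1` B).

Lemma measurable_above_level k u : 0 <= (ratr u : R) ->
  measurable [set w | above_level X b k u w].
Proof.
move=> u0; rewrite (_ : [set w | _] = X (ratr u) @^-1` `](b (ratr u) - k.+1%:R^-1), +oo[).
  exact: mX.
by apply/seteqP; split=> w /=; rewrite in_itv /= andbT /above_level /Yproc;
  set e := (k.+1%:R^-1 : R); lra.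
Qed.

Lemma measurable_Yproc_ltr u c : 0 <= (ratr u : R) ->
  measurable [set w | `|Yproc X b (ratr u) w| < c].
Proof.
move=> u0; rewrite (_ : [set w | _] = X (ratr u) @^-1` `](b (ratr u) - c), (b (ratr u) + c)[).
  exact: mX.
by apply/seteqP; split=> w /=; rewrite in_itv /= ltr_norml /Yproc => /andP[h1 h2];
  apply/andP; split; lra.
Qed.

Lemma measurable_rat_crossing p k : measurable (rat_crossing X b p k).
Proof.
apply: measurable_prop_and => p0.
have mabove u : (ratr p : R) < ratr u -> measurable [set w | above_level X b k u w].
  by move=> pu; apply: measurable_above_level; exact: le_trans (ltW pu).
apply: measurableI.
  apply: measurable_exists => a; apply: measurable_prop_and => pa.
  apply: measurable_forall => u; apply: measurable_prop_imp => pu.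
  by apply: measurable_prop_imp => ua; apply: measurableC; exact: mabove.
apply: measurable_forall => j; apply: measurable_exists => v; apply: measurableI.
  apply: measurable_exists => u; apply: measurable_prop_and => pu.
  by apply: measurable_prop_and => uv; exact: mabove.
apply: measurable_forall => u; apply: measurable_prop_imp => pu; apply: measurable_imp.
  apply: measurable_exists => u'; apply: measurable_prop_and => pu'.
  by apply: measurable_prop_and => u'u; exact: mabove.
apply: measurable_prop_imp => uv; apply: measurable_Yproc_ltr.
exact: le_trans (ltW pu).
Qed.

End rat_crossing_measurable.

Section predictable.
Context {R : realType} {d : measure_display} {T : measurableType d}.
Variables (F : R -> set (set T)) (X : R -> T -> R) (b : R -> R).
Hypothesis HF : filtration F.
Hypothesis adX : adapted F X.
Local Notation PT := (g_sigma_algebraType (pred_rects F)).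
Local Notation Y := (Yproc X b).

Lemma filtration_setT u : 0 <= u -> F u setT.
Proof. by move=> u0; have [[F0 FC _] _] := HF.1 u u0; rewrite -(setD0 setT); exact: FC F0. Qed.

Lemma filtration_setC u A : 0 <= u -> F u A -> F u (~` A).
Proof. by move=> u0 FA; have [[_ FC _] _] := HF.1 u u0; rewrite -setTD; exact: FC. Qed.

Lemma predictable_time_gt a : 0 <= a -> @measurable _ PT [set p : T * R | a < p.2].
Proof.
move=> a0; rewrite (_ : [set p : T * R | a < p.2] =
    \bigcup_n ([set: T] `*` [set v | a < v <= a + n.+1%:R])).
  apply: bigcupT_measurable => n; apply: sub_gen_smallest; right.
  exists a, (a + n.+1%:R), setT; split => //; first by rewrite ltrDl.
  exact: filtration_setT.
apply/seteqP; split => [[w t] /= at_|[w t] [n _] /= [_ /andP[]]//].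
exists (Num.truncn (t - a)) => //=; split => //; rewrite at_ /= -lerBlDl.
exact/ltW/truncnS_gt.
Qed.

Lemma predictable_time_gt_imp u (A : set T) : 0 <= u -> F u A ->
  @measurable _ PT [set p : T * R | u < p.2 -> A p.1].
Proof.
move=> u0 FA; rewrite (_ : [set p : T * R | u < p.2 -> A p.1] =
    ~` \bigcup_n ((~` A) `*` [set v | u < v <= u + n.+1%:R])).
  apply: measurableC; apply: bigcupT_measurable => n; apply: sub_gen_smallest; right.
  exists u, (u + n.+1%:R), (~` A); split => //; first by rewrite ltrDl.
  exact: filtration_setC.
apply/seteqP; split => [[w t] /= H [n _] /= [nA /andP[ut _]]|[w t] /= H ut].
  exact: nA (H ut).
apply: contra_notP H => nA; exists (Num.truncn (t - u)) => //=; split => //.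
by rewrite ut /= -lerBlDl; exact/ltW/truncnS_gt.
Qed.

(* The pairs (w, t) with 0 < t and |Y_{t-}(w) - q| < c (leftlim_Yproc_ballE),
   described through the values of Y at rational times before t. *)
Definition leftlim_Yproc_ball (q c : R) : set (T * R) := [set p | exists n : nat, exists a : rat,
  0 <= (ratr a : R) /\ (ratr a < p.2 /\ forall u : rat, (ratr a : R) < ratr u ->
   ratr u < p.2 -> `|Y (ratr u) p.1 - q| <= c - n.+1%:R^-1)].

Lemma predictable_leftlim_Yproc_ball q c : @measurable _ PT (leftlim_Yproc_ball q c).
Proof.
apply: measurable_exists => n; apply: measurable_exists => a.
apply: measurable_prop_and => a0; apply: measurableI; first exact: predictable_time_gt.
apply: measurable_forall => u; apply: measurable_prop_imp => au.
have u0 : 0 <= (ratr u : R) by exact: le_trans (ltW au).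
apply: (predictable_time_gt_imp u0 (A := [set w | `|Y (ratr u) w - q| <= c - n.+1%:R^-1])).
rewrite (_ : [set w | _] = X (ratr u) @^-1`
  `[q + b (ratr u) - (c - n.+1%:R^-1), q + b (ratr u) + (c - n.+1%:R^-1)]).
  exact: adX.
apply/seteqP; split=> w /=; rewrite in_itv /= ler_norml /Yproc => /andP[h1 h2];
  by apply/andP; split; set e := c - _ in h1 h2 *; lra.
Qed.

Hypothesis HX : cadlag X.
Hypothesis Hb : {within [set t : R | 0 <= t], continuous b}.

Lemma leftlim_Yproc_ballE q c w t :
  leftlim_Yproc_ball q c (w, t) <-> 0 < t /\ `|leftlim Y t w - q| < c.
Proof.
split.
  move=> [n [a [a0 [/= at_ Ha]]]]; have t0 : 0 < t by exact: le_lt_trans at_.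
  split => //; have [δ δ0 Hδ] := Yproc_left_dist_lt HX Hb w t0 (invr_succn_gt0 n).
  have [u [um ut]] : exists u : rat, Num.max (t - δ) (ratr a) < ratr u /\ ratr u < t.
    by apply: exists_rat_between; rewrite gt_max at_ gtrBl δ0.
  move: um; rewrite gt_max => /andP[um1 um2].
  have h1 := Hδ (ratr u); rewrite um1 ut in h1; have {}h1 := h1 isT.
  have h2 := Ha u um2 ut; have h3 := ler_distD (Y (ratr u) w) (leftlim Y t w) q.
  by set e := (n.+1%:R^-1 : R) in h1 h2 h3 *; lra.
move=> [t0 h].
have ch : 0 < (c - `|leftlim Y t w - q|) / 2 by rewrite divr_gt0// subr_gt0.
have [n Hn] := ltr_add_invr ch; rewrite add0r in Hn.
have [δ δ0 Hδ] := Yproc_left_dist_lt HX Hb w t0 (invr_succn_gt0 n).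
have [a [am at_]] : exists a : rat, Num.max (t - δ) 0 < ratr a /\ ratr a < t.
  by apply: exists_rat_between; rewrite gt_max t0 gtrBl δ0.
move: am; rewrite gt_max => /andP[am1 am2].
exists n, a; split; first exact: ltW.
split => // u au ut /=.
have h1 := Hδ (ratr u); rewrite (lt_trans am1 au) ut in h1; have {}h1 := h1 isT.
have h3 := ler_distD (leftlim Y t w) (Y (ratr u) w) q.
by rewrite distrC in h1; set e := (n.+1%:R^-1 : R) in Hn h1 h3 *; lra.
Qed.

End predictable.

Section ptilde.
Context {R : realType} {d : measure_display} {T : measurableType d}.
Variables (F : R -> set (set T)) (X : R -> T -> R) (b : R -> R).
Local Notation PT := (g_sigma_algebraType (pred_rects F)).
Local Notation PTT := (g_sigma_algebraType (ptilde_rects F)).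
Local Notation Y := (Yproc X b).

Lemma ptilde_measurable_pred (A : set (T * R)) : @measurable _ PT A ->
  @measurable _ PTT [set p : T * (R * R) | A (p.1, p.2.1)].
Proof.
move=> mA; apply: sub_gen_smallest; exists A, setT; split => //.
by apply/seteqP; split => p /=; [move=> ?; split|case].
Qed.

Lemma ptilde_measurable_mark (B : set R) : measurable B ->
  @measurable _ PTT [set p : T * (R * R) | B p.2.2].
Proof.
move=> mB; apply: sub_gen_smallest; exists setT, B; split => //.
  exact: (@measurableT _ PT).
by apply/seteqP; split => p /=; [move=> ?; split|case].
Qed.

Lemma ptilde_fun_indic (G : set (T * (R * R))) : @measurable _ PTT G ->
  ptilde_fun F (fun w z => (\1_G (w, z))%:E).
Proof.
move=> mG B mB.
have mI : measurable_fun [set: PTT] (EFin \o \1_G : PTT -> \bar R).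
  by apply/measurable_EFinP; exact: measurable_indic.
have := mI measurableT _ mB.
by congr (measurable _); rewrite setTI; apply/seteqP; split => -[w z].
Qed.

Definition Gamma0_pos : set (T * (R * R)) :=
  [set p | 0 < p.2.1 /\ leftlim Y p.2.1 p.1 < 0 /\ p.2.2 = - leftlim Y p.2.1 p.1].

Hypothesis HF : filtration F.
Hypothesis adX : adapted F X.
Hypothesis HX : cadlag X.
Hypothesis Hb : {within [set t : R | 0 <= t], continuous b}.

Lemma Gamma0_pos_sub w z : Gamma0_pos (w, z) -> Gamma0 X b w z.
Proof.
case: z => t x [/= t0 [Z0 xZ]]; rewrite /Gamma0 /= (Yproc_cvg_left HX Hb w t0).2.
by split; lra.
Qed.

Lemma Gamma0_pos_ratE : Gamma0_pos = [set p | (exists q : rat, (ratr q : R) < 0 /\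
    leftlim_Yproc_ball X b (ratr q) (- ratr q) (p.1, p.2.1)) /\
  forall n : nat, exists q : rat, leftlim_Yproc_ball X b (ratr q) (n.+1%:R^-1) (p.1, p.2.1) /\
    `|p.2.2 + ratr q| < n.+1%:R^-1].
Proof.
apply/seteqP; split => [[w [t x]] /= [t0 [Z0 /= xZ]]|[w [t x]] /=].
  split.
    have [q [q1 q2]] : exists q : rat, leftlim Y t w < ratr q /\ ratr q < leftlim Y t w / 2.
      by apply: exists_rat_between; lra.
    exists q; split; first by lra.
    by apply/(leftlim_Yproc_ballE HX Hb); split => //; rewrite ltr_norml; apply/andP; split; lra.
  move=> n.
  have [q [q1 q2]] : exists q : rat, leftlim Y t w - n.+1%:R^-1 < ratr q /\ ratr q < leftlim Y t w.
    by apply: exists_rat_between; rewrite gtrBl invr_succn_gt0.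
  exists q; rewrite /= xZ !ltr_norml; set e := (n.+1%:R^-1 : R) in q1 q2 *.
  by split; [apply/(leftlim_Yproc_ballE HX Hb); split => //; rewrite ltr_norml|];
    apply/andP; split; lra.
move=> [[q [q0 /(leftlim_Yproc_ballE HX Hb) [t0 hq]]] near_x].
split => //; split; first by move: hq; rewrite ltr_norml => /andP[h1 h2]; lra.
apply/eqP; rewrite -subr_eq0 opprK -normr_eq0 eq_le normr_ge0 andbT.
apply/ler_addgt0Pr => e e0; rewrite add0r.
have [n Hn] := ltr_add_invr (divr_gt0 e0 (ltr0n _ 2) : 0 < e / 2); rewrite add0r in Hn.
have [q' [/(leftlim_Yproc_ballE HX Hb) [_ h1] h2]] := near_x n.
have h3 : `|x + leftlim Y t w| <= `|x + ratr q'| + `|leftlim Y t w - ratr q'|.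
  by rewrite (_ : x + _ = (x + ratr q') + (leftlim Y t w - ratr q')) ?ler_normD//; ring.
by apply: ltW; set ee := (n.+1%:R^-1 : R) in Hn h1 h2 h3 *; apply: (le_lt_trans h3); lra.
Qed.

Lemma measurable_Gamma0_pos : @measurable _ PTT Gamma0_pos.
Proof.
have mball q c := ptilde_measurable_pred (predictable_leftlim_Yproc_ball b HF adX q c).
rewrite Gamma0_pos_ratE; apply: measurableI.
  by apply: measurable_exists => q; apply: measurable_prop_and => q0; exact: mball.
apply: measurable_forall => n; apply: measurable_exists => q; apply: measurableI.
  exact: mball.
apply: (ptilde_measurable_mark (B := [set x : R | `|x + ratr q| < n.+1%:R^-1])).
rewrite (_ : [set x : R | _] = `](- ratr q - n.+1%:R^-1), (- ratr q + n.+1%:R^-1)[%classic).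
  exact: measurable_itv.
apply/seteqP; split => x /=; rewrite in_itv /= ltr_norml => /andP[h1 h2];
  by apply/andP; split; set e := (n.+1%:R^-1 : R) in h1 h2 *; lra.
Qed.

End ptilde.

Section J0_negligible.
Context {R : realType} {d : measure_display} {T : measurableType d}.
Variables (P : probability T R) (F : R -> set (set T)) (X : R -> T -> R) (b : R -> R)
  (nu : T -> {measure set (R * R) -> \bar R}).
Hypothesis HF : filtration F.
Hypothesis adX : adapted F X.
Hypothesis HX : cadlag X.
Hypothesis Hb : {within [set t : R | 0 <= t], continuous b}.
Hypothesis X0_lt_b0 : forall w, X 0 w < b 0.
Hypothesis Hnu : jump_compensator P F X nu.

Let W : T -> R * R -> \bar R := fun w z => (\1_(Gamma0_pos X b) (w, z))%:E.

Let W_ge0 w z : (0 <= W w z)%E. Proof. by rewrite lee_fin. Qed.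

Lemma nu_int_oo_Gamma0_pos_eq0 w : (forall t, 0 <= t ->
    nu_int nu (fun w' z => (\1_(Gamma0 X b w') z)%:E) w t = 0%E) ->
  nu_int_oo nu W w = 0%E.
Proof.
move=> nuG0; apply: ge0_integral_eq0 => [z _|S mS SD]; first exact: W_ge0.
pose D (n : nat) : set (R * R) := [set z | 0 < z.1 <= n%:R].
have mD n : measurable (D n).
  rewrite (_ : D n = `]0, n%:R]%classic `*` setT); first exact: measurableX.
  by apply/seteqP; split => z /=; rewrite in_itv /=; [move=> ->|case].
have S0 n : nu w (S `&` D n) = 0%E.
  apply/eqP; rewrite eq_le measure_ge0 andbT -(nuG0 n%:R)//.
  apply: measure_le_ge0_integral; [exact: measurableI| by move=> z []|by move=> z _; rewrite lee_fin|].
  move=> z [/SD [_ /=]]; rewrite /W indicE.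
  have [Gz|nGz] := pselect (Gamma0_pos X b (w, z)); last by rewrite memNset// lte_fin ltxx.
  by move=> _ _; rewrite indicE mem_set//; exact: Gamma0_pos_sub.
have : (nu w).-negligible (\bigcup_n (S `&` D n)).
  by apply: negligible_bigcup => n; apply/negligibleP; [exact: measurableI|exact: S0].
rewrite (_ : \bigcup_n (S `&` D n) = S); first by move/negligibleP => ->.
apply/seteqP; split => [z [n _ []]//|z Sz]; have [/= z0 _] := SD z Sz.
exists (Num.truncn z.1).+1 => //; split => //; rewrite /D /= z0.
exact/ltW/truncnS_gt.
Qed.

Lemma mu_int_oo_Gamma0_pos_ge1 w : jumps_to_zero X b w -> (1 <= mu_int_oo X W w)%E.
Proof.
move=> [s [s0 Ys Zs]].
have jumpE : jump X s w = - leftlim (Yproc X b) s w.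
  by rewrite /jump (Yproc_cvg_left HX Hb w s0).2; move: Ys; rewrite /Yproc; lra.
apply: esum_ge; exists [set s].
  split; first exact: finite_set1.
  by move=> _ ->; split => //; rewrite jumpE oppr_eq0 lt_eqF.
by rewrite fsbig_set1 /W indicE mem_set.
Qed.

Lemma J0_jumps_to_zero : J0 X b `<=` jumps_to_zero X b.
Proof.
move=> w [r [hr Zr Yr]]; exists r; split => //.
have : (0 <= hit_time X b w)%E.
  by apply: le_ereal_inf_tmp => _ [t [t0 _] <-]; rewrite lee_fin.
rewrite hr lee_fin le_eqVlt => /orP[/eqP r0|//].
by move: Yr; rewrite -r0 /Yproc => /eqP; rewrite subr_eq0 => /eqP X0b; have := X0_lt_b0 w; rewrite X0b ltxx.
Qed.

Lemma J0_negligible : P.-negligible [set w | exists t : R, 0 <= t /\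
      nu_int nu (fun w' z => (\1_(Gamma0 X b w') z)%:E) w t != 0%E] ->
   P.-negligible (J0 X b).
Proof.
move=> [N [mN PN nuN]].
have Enu : (\int[P]_w nu_int_oo nu W w = 0)%E.
  apply: ge0_integral_eq0 => [w _|S mS SD]; first by apply: integral_ge0 => z _; exact: W_ge0.
  apply/eqP; rewrite eq_le measure_ge0 andbT -PN; apply: le_measure; rewrite ?inE//.
  move=> w /SD [_ /=]; apply: contraPP => nNw.
  rewrite nu_int_oo_Gamma0_pos_eq0 ?ltxx// => t t0; apply/eqP.
  by apply: contra_notT nNw => nut; apply: nuN; exists t.
have Emu : (\int[P]_w mu_int_oo X W w = 0)%E.
  by rewrite (Hnu (ptilde_fun_indic (measurable_Gamma0_pos HF adX HX Hb)) W_ge0).2.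
have mX t : 0 <= t -> forall B : set R, measurable B -> measurable (X t @^-1` B).
  by move=> t0 B mB; apply: (HF.1 t t0).2; exact: adX.
pose M := \bigcup_(p : rat) \bigcup_(k : nat) rat_crossing X b p k.
have mM : measurable M.
  apply: bigcupT_measurable_rat => p; apply: bigcupT_measurable => k.
  exact: (measurable_rat_crossing b mX).
exists M; split => //.
- apply/eqP; rewrite eq_le measure_ge0 andbT -Emu.
  apply: measure_le_ge0_integral => //; first by move=> w _; apply: esum_ge0 => *; exact: W_ge0.
  move=> w [p _ [k _ /(rat_crossing_jumps_to_zero HX Hb)]].
  exact: mu_int_oo_Gamma0_pos_ge1.
- move=> w /J0_jumps_to_zero /(jumps_to_zero_rat_crossing HX Hb) [p [k Mw]].
  by exists p => //; exists k.
Qed.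

End J0_negligible.

Section dA_kernel.
Context {R : realType} {d : measure_display} {T : measurableType d}.
Variables (F : R -> set (set T)) (A : R -> T -> R) (alpha : T -> {measure set R -> \bar R}).
Hypothesis HF : filtration F.
Hypothesis predA : predictable_fun F (fun w t => (A t w)%:E).
Hypothesis alphaE : forall w s t, 0 <= s -> s <= t ->
  alpha w [set u | s < u <= t] = (A t w - A s w)%:E.

Lemma predictable_set_measurable : predictable_set F `<=` @measurable _ (T * R)%type.
Proof.
apply: smallest_sub; first exact: sigma_algebra_measurable.
move=> C [[B [FB ->]]|[s [t [B [s0 st FB ->]]]]].
  by apply: measurableX; [exact: (HF.1 0 (lexx _)).2|exact: measurable_set1].
apply: measurableX; first exact: (HF.1 s s0).2.
rewrite (_ : [set u | s < u <= t] = `]s, t]%classic); first exact: measurable_itv.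
by apply/seteqP; split => u /=; rewrite in_itv.
Qed.

Lemma measurable_fun_predictable_at t : measurable_fun setT (A t).
Proof.
apply/measurable_EFinP => _ B mB; rewrite setTI.
have := measurable_ysection t (predictable_set_measurable (predA mB)).
by rewrite /ysection /=; congr (measurable _); apply/seteqP; split => x /=; rewrite inE.
Qed.

Definition window (n : nat) : set R := [set u | 0 < u <= n%:R].

Lemma measurable_window n : measurable (window n).
Proof.
rewrite (_ : window n = `]0, n%:R]%classic); first exact: measurable_itv.
by apply/seteqP; split => u /=; rewrite in_itv.
Qed.

Lemma alpha_window_lty w n : (alpha w (window n) < +oo)%E.
Proof. by rewrite /window alphaE// ltry. Qed.

Lemma measurable_alpha_ocitv_window n a c :
  measurable_fun setT (fun w => alpha w (`]a, c]%classic `&` window n)).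
Proof.
have [le|lt] := leP (Num.max a 0) (Num.min c n%:R); last first.
  rewrite (_ : `]a, c]%classic `&` window n = set0).
    by under eq_fun do rewrite measure0; exact: measurable_cst.
  apply/seteqP; split => u //=; rewrite in_itv /= => -[/andP[au uc] /andP[u0 un]].
  have h1 : Num.max a 0 < u by rewrite gt_max au u0.
  have h2 : u <= Num.min c n%:R by rewrite le_min uc un.
  by have := lt_trans (le_lt_trans h2 lt) h1; rewrite ltxx.
rewrite (_ : `]a, c]%classic `&` window n = [set u | Num.max a 0 < u <= Num.min c n%:R]).
  under eq_fun do rewrite alphaE ?le_max ?lexx ?orbT//.
  apply/measurable_EFinP; apply: measurable_funB; apply: measurable_fun_predictable_at.
apply/seteqP; split => u /=; rewrite in_itv /= gt_max le_min.
  by move=> [/andP[au uc] /andP[u0 un]]; apply/andP; split; apply/andP; split.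
by move=> /andP[/andP[au u0] /andP[uc un]]; split; apply/andP; split.
Qed.

Lemma measurable_alpha_window n U : measurable U ->
  measurable_fun setT (fun w => alpha w (U `&` window n)).
Proof.
move: U; apply: (@dynkin_induction _ R (R.-ocitv.-measurable : set (set R))
  (fun U => measurable_fun setT (fun w => alpha w (U `&` window n)))) => //.
- exact: ocitvI.
- under eq_fun do rewrite setTI /window alphaE//.
  by apply/measurable_EFinP; apply: measurable_funB; exact: measurable_fun_predictable_at.
- move=> U /ocitvP[->|[[a c] /= _ ->]]; last exact: measurable_alpha_ocitv_window.
  by under eq_fun do rewrite set0I measure0; exact: measurable_cst.
- move=> U mU mUn.
  rewrite (_ : (fun w => alpha w (~` U `&` window n)) =
    (fun w => alpha w (window n) - alpha w (U `&` window n))%E).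
    apply: emeasurable_funB => //.
    under eq_fun do rewrite /window alphaE//.
    by apply/measurable_EFinP; apply: measurable_funB; exact: measurable_fun_predictable_at.
  apply/funext => w; rewrite -[in RHS](setIidr (@subIsetr _ U (window n))).
  rewrite -measureD ?alpha_window_lty//; last 2 first.
  - exact: measurable_window.
  - exact: measurableI mU (measurable_window n).
  by rewrite setDIr setDv setU0 setDE setIC.
- move=> G mG tG mGn.
  rewrite (_ : (fun w => alpha w (\bigcup_k G k `&` window n)) =
    (fun w => \sum_(k <oo | k \in setT) alpha w (G k `&` window n))%E).
    by apply: ge0_emeasurable_sum => // k _ _; exact: mGn.
  apply/funext => w; rewrite setI_bigcupl measure_bigcup//; last exact: trivIset_setIr.
  by move=> i _; exact: measurableI (measurable_window n).
Qed.

Definition alpha_window (n : nat) : T -> {measure set R -> \bar R} :=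
  fun w => mrestr (alpha w) (measurable_window n).

HB.instance Definition _ n := isKernel.Build _ _ T R R (alpha_window n)
  (fun U mU => measurable_alpha_window n mU).

Lemma measurable_alpha_xsection_window n (N : set (T * R)) : measurable N ->
  measurable_fun setT (fun w => alpha w (xsection N w `&` window n)).
Proof.
move=> mN; have := @measurable_prod_subset_xsection_kernel _ _ T R R (alpha_window n)
  setT measurableT _ N mN.
case=> [w|_].
  exists (fine (alpha w (window n)) + 1) => B mB; rewrite /alpha_window /mrestr setIT.
  rewrite (@le_lt_trans _ _ (alpha w (window n)))//.
    apply: le_measure; rewrite ?inE//; last exact: measurable_window.
    exact: measurableI (measurable_window n).
  by rewrite /window alphaE//= lte_fin ltrDl.
by congr (measurable_fun _ _); apply/funext => w; rewrite /alpha_window /mrestr setIT.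
Qed.

End dA_kernel.

Lemma Gamma0_mark_unique {R : realType} {d : measure_display} {T : measurableType d}
    (X : R -> T -> R) (b : R -> R) w s x y :
  Gamma0 X b w (s, x) -> Gamma0 X b w (s, y) -> x = y.
Proof. by move=> [_ /= ->] [_ /= ->]. Qed.

Lemma indic_gt0_mem {R : realType} (U : Type) (B : set U) z :
  (0 < (\1_B z)%:E :> \bar R)%E -> B z.
Proof. by rewrite indicE; have [/set_mem//|_] := boolP (z \in B); rewrite lte_fin ltxx. Qed.

Section disintegration.
Context {R : realType} {d : measure_display} {T : measurableType d}.
Variables (P : probability T R) (F : R -> set (set T)) (X : R -> T -> R) (b : R -> R)
  (nu : T -> {measure set (R * R) -> \bar R}).
Variables (A : R -> T -> R) (alpha : T -> {measure set R -> \bar R})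
  (K : T -> R -> {measure set R -> \bar R}) (N : set (T * R)).
Hypothesis HF : filtration F.
Hypothesis predA : predictable_fun F (fun w t => (A t w)%:E).
Hypothesis alphaE : forall w s t, 0 <= s -> s <= t ->
  alpha w [set u | s < u <= t] = (A t w - A s w)%:E.
Hypothesis nuE : forall w (C : set (R * R)), measurable C -> C `<=` [set z | 0 < z.1] ->
  nu w C = (\int[alpha w]_t K w t [set x | C (t, x)])%E.
Hypothesis mN : measurable N.
Hypothesis atoms_sub : [set p | exists x, K p.1 p.2 [set x] != 0%E] `<=` N.
Hypothesis alphaN : (\int[P]_w alpha w [set t | N (w, t)] = 0)%E.

Let measurable_xsection_window w n : measurable (xsection N w `&` window n).
Proof. exact: measurableI (measurable_xsection _ _) (measurable_window n). Qed.

Lemma alpha_xsection_window_negligible n :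
  P.-negligible [set w | alpha w (xsection N w `&` window n) != 0%E].
Proof.
have mh := measurable_alpha_xsection_window HF predA alphaE n mN.
have h0 : (\int[P]_w `|alpha w (xsection N w `&` window n)| = 0)%E.
  apply/eqP; rewrite eq_le integral_ge0// andbT -alphaN.
  apply: ge0_le_integral_minorants => // w _; rewrite gee0_abs//.
  apply: le_measure; rewrite ?inE//; last by move=> t [] /=; rewrite /xsection /= inE.
  rewrite (_ : [set t | N (w, t)] = xsection N w); first exact: measurable_xsection.
  by apply/seteqP; split => t /=; rewrite /xsection /= inE.
have := (ae_eq_integral_abs P measurableT mh).1 h0.
by apply: negligibleS => w /= /eqP hw; apply: contra_not hw; apply.
Qed.

Lemma nu_int_Gamma0_eq0 w t :
    (forall n, alpha w (xsection N w `&` window n) = 0%E) ->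
  nu_int nu (fun w' z => (\1_(Gamma0 X b w') z)%:E) w t = 0%E.
Proof.
move=> alphaN0; apply: ge0_integral_eq0 => [z _|S mS SD]; first by rewrite lee_fin.
rewrite nuE//; last by move=> z /SD [/= /andP[]].
apply: ge0_integral_eq0 => [s _|S' mS' S'D]; first exact: measure_ge0.
apply/negligibleP => //.
have Nnull n : (alpha w).-negligible (xsection N w `&` window n).
  by apply/negligibleP; [exact: measurable_xsection_window|exact: alphaN0].
apply: (negligibleS _ (negligible_bigcup Nnull)) => s /S'D [_ /= Kpos].
have [x0 Sx0] : exists x0, S (s, x0).
  apply: contrapT => nS; move: Kpos.
  rewrite (_ : [set x | S (s, x)] = set0) ?measure0 ?ltxx//.
  by apply/seteqP; split => x //= Sx; apply: nS; exists x.
have [Ds G0] := SD _ Sx0; have /andP[s0 _] := Ds.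
have Sx0E : [set x | S (s, x)] = [set x0].
  apply/seteqP; split => [x /SD [_ G1]|x ->//].
  exact: Gamma0_mark_unique (indic_gt0_mem G1) (indic_gt0_mem G0).
have Ns : N (w, s) by apply: atoms_sub; exists x0; rewrite /= -Sx0E gt_eqF.
exists (Num.truncn s).+1 => //; split; first by rewrite /xsection /= inE.
by rewrite /window /= s0; exact/ltW/truncnS_gt.
Qed.

Lemma Gamma0_nu_int_negligible : P.-negligible [set w | exists t : R, 0 <= t /\
    nu_int nu (fun w' z => (\1_(Gamma0 X b w') z)%:E) w t != 0%E].
Proof.
apply: negligibleS (negligible_bigcup alpha_xsection_window_negligible).
move=> w [t [_]]; apply: contraPP => /= alphaN0; apply/negP; rewrite negbK.
by apply/eqP/nu_int_Gamma0_eq0 => n; apply: contrapT => /eqP ?; apply: alphaN0; exists n.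
Qed.

End disintegration.

Unset Implicit Arguments.
Set Strict Implicit.

Theorem proposition3p5 (R : realType) (d : measure_display) (T : measurableType d)
  (P : probability T R) (F : R -> set (set T)) (X : R -> T -> R) (b : R -> R)
  (nu : T -> {measure set (R * R) -> \bar R}) :
  usual_conditions P F ->
  semimartingale P F X ->
  {within [set t : R | 0 <= t], continuous b} ->
  (forall w, X 0 w < b 0) ->
  jump_compensator P F X nu ->
  (P.-negligible [set w | exists t : R, 0 <= t /\
      nu_int nu (fun w' z => (\1_(Gamma0 X b w') z)%:E) w t != 0%E] ->
   P.-negligible (J0 X b)) /\
  (forall (A : R -> T -> R) (alpha : T -> {measure set R -> \bar R})
          (K : T -> R -> {measure set R -> \bar R}),
     cadlag A -> predictable_fun F (fun w t => (A t w)%:E) ->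
     (forall w s t, 0 <= s -> s <= t -> A s w <= A t w) ->
     (* alpha w = dA(w), the Lebesgue-Stieltjes measure of A(w) on ]0, oo[ *)
     (forall w s t, 0 <= s -> s <= t ->
        alpha w [set u | s < u <= t] = (A t w - A s w)%:E) ->
     (forall w, alpha w [set u | u <= 0] = 0%E) ->
     (forall B : set R, measurable B -> predictable_fun F (fun w t => K w t B)) ->
     (forall w (C : set (R * R)), measurable C -> C `<=` [set z | 0 < z.1] ->
        nu w C = (\int[alpha w]_t K w t [set x | C (t, x)])%E) ->
     (* K(w, t, .) is diffuse for P (x) dA - almost every (w, t) *)
     (exists N : set (T * R), [/\ measurable N,
        [set p | exists x, K p.1 p.2 [set x] != 0%E] `<=` N &
        (\int[P]_w alpha w [set t | N (w, t)] = 0)%E]) ->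
     P.-negligible (J0 X b)).
Proof.
move=> [HF _] [HX [adX _]] Hb X0_lt_b0 Hnu.
have J0_null := J0_negligible HF adX HX Hb X0_lt_b0 Hnu.
split => // A alpha K _ predA _ alphaE _ _ nuE [N [mN atoms_sub alphaN]].
apply: J0_null; exact: Gamma0_nu_int_negligible HF predA alphaE nuE mN atoms_sub alphaN.
Qed.
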